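(* Let $b\ge1$, $1\le a\le b$, $t\ge0$ be integers and $d=2t+1$. Let $\nu^{\text{off-diag}}$ be the number of pairs $(k,q)$ with $k$ odd, $1\le k<d$, $-k\le q\le k$, $q\equiv 2a-1\pmod{2b}$. Then $\nu^{\text{off-diag}}=\tfrac{t^2}{b}+\tfrac{t}{b}+\tfrac{2a(a-b-1)+b+1}{2b}+c$, where $c=\tfrac{1}{2b}[t+1-a]_b^2+\tfrac{1}{2b}[t+1-a]_b\big(b-2-2[t-a]_b\big)+\tfrac{1}{2b}[t+a]_b\big(b-2-2[a+t-1]_b+[a+t]_b\big)$, and $0\le c\le 2b$.
   Context: For an integer $x$ and positive integer $y$, $[x]_y:=x\bmod y\in\{0,\dots,y-1\}$. *)

From mathcomp Require Import all_boot all_order all_algebra.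
Set Implicit Arguments. Unset Strict Implicit. Unset Printing Implicit Defensive.
Import Order.TTheory GRing.Theory Num.Theory.
Local Open Scope ring_scope.

Definition brmod (x : int) (y : nat) : rat := ((x %% y%:Z)%Z)%:~R.

(* nu^{off-diag}: number of pairs (k,q), k odd, 1 <= k < d = 2t+1,
   q an integer with -k <= q <= k and q = 2a-1 (mod 2b).
   k ranges over 'I_(2t+1) restricted to odd k (so k >= 1 automatically);
   q is written q = i - k with i < 2k+1. *)
Definition nu_offdiag (a b t : nat) : nat :=
  \sum_(k < (2 * t + 1)%N | odd k)
     \sum_(i < (2 * k + 1)%N)
        ((i%:Z - k%:Z) == (2 * a%:Z - 1) %[mod (2 * b)%:Z])%Z.

Definition c_term (a b t : nat) : rat :=
  let B : rat := b%:R in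
  let ti : int := t%:Z in let ai : int := a%:Z in
  (brmod (ti + 1 - ai) b) ^+ 2 / (2 * B)
  + brmod (ti + 1 - ai) b * (B - 2 - 2 * brmod (ti - ai) b) / (2 * B)
  + brmod (ti + ai) b * (B - 2 - 2 * brmod (ai + ti - 1) b + brmod (ai + ti) b) / (2 * B).

From mathcomp Require Import all_boot all_order all_algebra zify ring lra.
Import Order.TTheory GRing.Theory Num.Theory.
Local Open Scope ring_scope.

(* Only odd q can be congruent to 2a-1 mod 2b.  Writing q = 2w+1, the row
   k = 2s+1 counts the w in [-s-1, s] with w = a-1 (mod b), i.e. the multiples
   of b in an interval of length 2s+2, so b times the row count is
   2s+1+b-[s+1-a]_b-[s+a]_b.  Summing over s < t, the residues telescope
   against the tent function g(x) = [x]_b (b - [x]_b), whose increments are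
   g(x+1) - g(x) = b - 1 - 2[x]_b.  This gives
   2b nu = 2t^2 + 2t + g(t+1-a) + g(t+a) - g(1-a) - g(a), where g(a) and
   g(1-a) are explicit for 1 <= a <= b, and c = (g(t+1-a) + g(t+a))/(2b),
   which lies in [0, b]. *)

Lemma big_nat_double (R : Type) (idx : R) (op : Monoid.law idx)
    (n : nat) (F : nat -> R) :
  \big[op/idx]_(i < n.*2) F i = \big[op/idx]_(j < n) op (F j.*2) (F j.*2.+1).
Proof.
elim: n => [|n IHn]; first by rewrite !big_ord0.
by rewrite !big_ord_recr /= -IHn -Monoid.mulmA.
Qed.

Section ResiduesModB.

Variable b : nat.
Hypothesis b_gt0 : (0 < b)%N.

Lemma modz_small_eq (x q r : int) : 0 <= r < b%:Z -> x = q * b%:Z + r ->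
  (x %% b%:Z)%Z = r.
Proof. by move=> r_bnd ->; rewrite modzMDl modz_small. Qed.

Lemma modz_bounds (x : int) : 0 <= (x %% b%:Z)%Z < b%:Z.
Proof.
have b_neq0 : b%:Z != 0 by lia.
by rewrite modz_ge0 // ltz_pmod //; lia.
Qed.

Lemma modzS_cases (x : int) :
  ((x + 1) %% b%:Z)%Z = (x %% b%:Z)%Z + 1 \/
  ((x + 1) %% b%:Z)%Z = 0 /\ (x %% b%:Z)%Z = b%:Z - 1.
Proof.
have /andP[r_ge0 r_ltb] := modz_bounds x.
rewrite -modzDml; have [r_lt|r_ge] := ltP ((x %% b%:Z)%Z + 1) b%:Z.
  by left; apply: (@modz_small_eq _ 0); lia.
by right; split; [apply: (@modz_small_eq _ 1)|]; lia.
Qed.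

Lemma modzNS (x : int) : ((- (x + 1)) %% b%:Z)%Z = b%:Z - 1 - (x %% b%:Z)%Z.
Proof.
have /andP[r_ge0 r_ltb] := modz_bounds x.
apply: (@modz_small_eq _ (- (x %/ b%:Z)%Z - 1)); first lia.
rewrite [x in LHS](divz_eq x b%:Z); ring.
Qed.

Lemma dvdzS_mulE (x : int) :
  ((b%:Z %| x + 1)%Z : int) * b%:Z = 1 + (x %% b%:Z)%Z - ((x + 1) %% b%:Z)%Z.
Proof.
have -> : (b%:Z %| x + 1)%Z = (((x + 1) %% b%:Z)%Z == 0).
  by apply/dvdz_mod0P/eqP.
have /andP[r_ge0 _] := modz_bounds x.
case: (modzS_cases x) => [->|[-> ->]]; last by rewrite eqxx /=; ring.
by rewrite gt_eqF /=; [ring | lia].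
Qed.

Lemma sum_dvdz_interval (y : int) (n : nat) :
  (\sum_(i < n) (b%:Z %| (y + i.+1%:Z)%R)%Z)%:Z * b%:Z
    = n%:Z + (y %% b%:Z)%Z - ((y + n%:Z) %% b%:Z)%Z.
Proof.
elim: n => [|n IHn]; first by rewrite big_ord0 addr0; ring.
rewrite big_ord_recr /= PoszD mulrDl IHn.
have -> : y + n.+1%:Z = (y + n%:Z) + 1 by lia.
rewrite dvdzS_mulE; ring.
Qed.

Definition tent (x : int) : int := (x %% b%:Z)%Z * (b%:Z - (x %% b%:Z)%Z).

Lemma tentS (x : int) : tent (x + 1) = tent x + b%:Z - 1 - 2 * (x %% b%:Z)%Z.
Proof. by rewrite /tent; case: (modzS_cases x) => [->|[-> ->]]; ring. Qed.

Lemma tentDr (x : int) : tent (x + b%:Z) = tent x.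
Proof. by rewrite /tent modzDr. Qed.

Lemma tent_id (x : int) : 0 <= x <= b%:Z -> tent x = x * (b%:Z - x).
Proof.
move=> x_bnd; rewrite /tent; have [->|x_neqb] := eqVneq x b%:Z.
  by rewrite modzz; ring.
by rewrite (@modz_small_eq x 0 x) //; lia.
Qed.

Lemma tent_bounds (x : int) : 0 <= tent x <= b%:Z ^+ 2.
Proof. have := modz_bounds x; rewrite /tent; nia. Qed.

End ResiduesModB.

Lemma eqz_mod_double_odd (m : nat) (w c : int) :
  (2 * w + 1 == 2 * c - 1 %[mod (2 * m)%:Z])%Z = (m%:Z %| w + 1 - c)%Z.
Proof.
rewrite eqz_mod_dvd; apply/dvdzP/dvdzP => -[q q_eq]; exists q; lia.
Qed.

Lemma eqz_mod_double_even (m : nat) (w c : int) :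
  (2 * w == 2 * c - 1 %[mod (2 * m)%:Z])%Z = false.
Proof. by rewrite eqz_mod_dvd; apply/dvdzP => -[q q_eq]; lia. Qed.

Definition nu_row (a b k : nat) : nat :=
  \sum_(i < (2 * k + 1)%N)
     ((i%:Z - k%:Z) == (2 * a%:Z - 1) %[mod (2 * b)%:Z])%Z.

Lemma nu_offdiagE (a b t : nat) :
  nu_offdiag a b t = \sum_(k < (2 * t + 1)%N | odd k) nu_row a b k.
Proof. by []. Qed.

Lemma nu_row_odd (a b s : nat) : (0 < b)%N ->
  (nu_row a b (2 * s + 1))%:Z * b%:Z
    = 2 * s%:Z + 1 + b%:Z
      - ((s%:Z + 1 - a%:Z) %% b%:Z)%Z - ((s%:Z + a%:Z) %% b%:Z)%Z.
Proof.
move=> b_gt0; set k := (2 * s + 1)%N.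
pose F (i : nat) : nat :=
  ((i%:Z - k%:Z) == (2 * a%:Z - 1) %[mod (2 * b)%:Z])%Z.
have F_odd j : F j.*2.+1 = 0%N.
  rewrite /F (_ : j.*2.+1%:Z - k%:Z = 2 * (j%:Z - s%:Z)); last lia.
  by rewrite eqz_mod_double_even.
have F_even j : F j.*2 = (b%:Z %| (- (s%:Z + a%:Z + 1) + j.+1%:Z)%R)%Z.
  rewrite /F (_ : j.*2%:Z - k%:Z = 2 * (j%:Z - s%:Z - 1) + 1); last lia.
  rewrite eqz_mod_double_odd.
  by rewrite (_ : _ + 1 - a%:Z = - (s%:Z + a%:Z + 1) + j.+1%:Z) //; lia.
have -> : nu_row a b k = \sum_(i < k.+1.*2) F i.
  by rewrite big_ord_recr /= F_odd addr0 /nu_row mul2n addn1.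
rewrite big_nat_double.
under eq_bigr do rewrite /= F_odd addr0 F_even.
rewrite sum_dvdz_interval // modzNS //.
rewrite (_ : _ + k.+1%:Z = s%:Z + 1 - a%:Z); last lia.
rewrite /k; lia.
Qed.

Lemma nu_offdiagS (a b t : nat) :
  nu_offdiag a b t.+1 = (nu_offdiag a b t + nu_row a b (2 * t + 1))%N.
Proof.
rewrite !nu_offdiagE (_ : (2 * t.+1 + 1 = (2 * t + 1).+2)%N); last lia.
rewrite big_mkcond [in RHS]big_mkcond !big_ord_recr /=.
by rewrite oddD oddM /= !addr0.
Qed.

Lemma nu_offdiag_mul (a b t : nat) : (0 < b)%N ->
  2 * b%:Z * (nu_offdiag a b t)%:Z
    = 2 * t%:Z ^+ 2 + 2 * t%:Z
      + tent b (t%:Z + 1 - a%:Z) + tent b (t%:Z + a%:Z)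
      - tent b (1 - a%:Z) - tent b a%:Z.
Proof.
move=> b_gt0; elim: t => [|t IHt].
  by rewrite nu_offdiagE big_mkcond big_ord_recr big_ord0 /=; ring.
rewrite nu_offdiagS PoszD mulrDr IHt -mulrA [b%:Z * _]mulrC nu_row_odd //.
rewrite (_ : t.+1%:Z + 1 - a%:Z = (t%:Z + 1 - a%:Z) + 1); last lia.
rewrite (_ : t.+1%:Z + a%:Z = (t%:Z + a%:Z) + 1); last lia.
rewrite !tentS // -(addn1 t) PoszD; ring.
Qed.

Lemma c_term_tent (a b t : nat) : (0 < b)%N ->
  c_term a b t
    = (tent b (t%:Z + 1 - a%:Z) + tent b (t%:Z + a%:Z))%:~R / (2 * b%:R).
Proof.
move=> b_gt0; rewrite /c_term /brmod /tent /=.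
rewrite (_ : t%:Z + 1 - a%:Z = (t%:Z - a%:Z) + 1); last lia.
set y := a%:Z + t%:Z - 1.
rewrite (_ : t%:Z + a%:Z = y + 1); last by rewrite /y; lia.
rewrite (_ : a%:Z + t%:Z = y + 1); last by rewrite /y; lia.
case: (modzS_cases _ b_gt0 (t%:Z - a%:Z)) => [->|[-> ->]];
case: (modzS_cases _ b_gt0 y) => [->|[-> ->]];
  by field; rewrite pnatr_eq0 -lt0n.
Qed.

Lemma c_term_bounds (a b t : nat) : (0 < b)%N -> 0 <= c_term a b t <= b%:R.
Proof.
move=> b_gt0; rewrite c_term_tent //.
have b_pos : (0 : rat) < b%:R by rewrite ltr0n.
have tent_bnd x : 0 <= ((tent b x)%:~R : rat) <= b%:R ^+ 2.
  rewrite (_ : b%:R ^+ 2 = (b%:Z ^+ 2)%:~R :> rat); last ring.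
  by rewrite ler0z ler_int tent_bounds.
have /andP[T1_ge0 T1_le] := tent_bnd (t%:Z + 1 - a%:Z).
have /andP[T2_ge0 T2_le] := tent_bnd (t%:Z + a%:Z).
rewrite intrD; apply/andP; split.
  by rewrite divr_ge0 ?addr_ge0 // mulr_ge0 // ltW.
rewrite ler_pdivrMr ?mulr_gt0 //; nra.
Qed.

Theorem lemmaS12 (a b t : nat) :
  (1 <= b)%N -> (1 <= a)%N -> (a <= b)%N ->
  ((nu_offdiag a b t)%:R : rat) =
      (t ^ 2)%:R / b%:R + t%:R / b%:R
      + (2 * a%:R * (a%:R - b%:R - 1) + b%:R + 1) / (2 * b%:R)
      + c_term a b t
  /\ 0 <= c_term a b t <= 2 * b%:R.
Proof.
move=> b_gt0 a_gt0 a_leb.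
have b_neq0 : b%:R != 0 :> rat by rewrite pnatr_eq0 -lt0n.
have tent_a : tent b a%:Z = a%:Z * (b%:Z - a%:Z) by apply: tent_id; lia.
have tent_1a : tent b (1 - a%:Z) = (b%:Z + 1 - a%:Z) * (a%:Z - 1).
  by rewrite -tentDr tent_id //; [ring | lia].
have nu_eq := nu_offdiag_mul a b t b_gt0; rewrite tent_a tent_1a in nu_eq.
split.
  have -> : (nu_offdiag a b t)%:R
      = (2 * b%:Z * (nu_offdiag a b t)%:Z)%:~R / (2 * b%:R) :> rat by field.
  by rewrite nu_eq c_term_tent //; field.
have /andP[c_ge0 c_leb] := c_term_bounds a b t b_gt0.
rewrite c_ge0 /= (le_trans c_leb) // ler_pMl ?ltr0n //; lra.
Qed.
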